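(* Let $\mathfrak{n}$ be a $2$-step nilpotent real Lie algebra with center $\mathfrak{z}$ and commutator $\mathfrak{n}'$, and let $J$ be a linear map with $J^2=-I$ and $J\mathfrak{n}'\subset\mathfrak{z}$. Put $\mathfrak{z}_0=\mathfrak{n}'+J\mathfrak{n}'$. Let $\langle\cdot,\cdot\rangle$ be any inner product on $\mathfrak{n}$ with $\langle Jx,Jy\rangle=\langle x,y\rangle$, let $\mathfrak{v}$ be the orthogonal complement of $\mathfrak{z}_0$ (so $\mathfrak{v}$ is $J$-invariant, $\dim\mathfrak{v}=2n$), and $J_{\mathfrak{v}}=J|_{\mathfrak{v}}$. For $z\in\mathfrak{z}_0$ define $j(z)\in\operatorname{End}(\mathfrak{v})$ by $\langle j(z)v,w\rangle=\langle z,[v,w]\rangle$ for $v,w\in\mathfrak{v}$, and $S(z)=j(Jz)-J_{\mathfrak{v}}\circ j(z)$. Then $J$ is integrable (i.e. $N_J\equiv0$) if and only if $S(z)\circ J_{\mathfrak{v}}=J_{\mathfrak{v}}\circ S(z)$ for all $z\in\mathfrak{z}_0$. Moreover, for any subspace $\mathfrak{p}\subset\mathfrak{z}_0$ with $\mathfrak{z}_0=\mathfrak{p}\oplus J\mathfrak{p}$, $J$ is integrable if and only if $S(z)$ commutes with $J_{\mathfrak{v}}$ for all $z\in\mathfrak{p}$.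
   Context: $N_J(x,y)=[x,y]+J([Jx,y]+[x,Jy])-[Jx,Jy]$. A Lie algebra $\mathfrak{n}$ is $2$-step nilpotent if it is non-abelian and $\mathfrak{n}'=[\mathfrak{n},\mathfrak{n}]\subset\mathfrak{z}$. *)

From HB Require Import structures.
From mathcomp Require Import all_boot all_order all_algebra.
From mathcomp Require Import boolp classical_sets reals.
Set Implicit Arguments. Unset Strict Implicit. Unset Printing Implicit Defensive.
Import Order.TTheory GRing.Theory Num.Theory.
Local Open Scope ring_scope.

(* A real Lie algebra of dimension m is modelled on 'rV[R]_m (R : realType)
   with a bracket br; linear maps act on row vectors on the right: x *m J. *)

Section Defs.
Variables (R : realType) (m : nat).
Local Notation V := 'rV[R]_m.

Definition is_lie_bracket (br : V -> V -> V) : Prop :=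
  [/\ (forall (a : R) x y w, br (a *: x + y) w = a *: br x w + br y w),
      (forall (a : R) x y w, br w (a *: x + y) = a *: br w x + br w y),
      (forall x, br x x = 0) &
      (forall x y w, br x (br y w) + br y (br w x) + br w (br x y) = 0)].

Definition in_center (br : V -> V -> V) (x : V) : Prop := forall y, br x y = 0.

Definition commutator (br : V -> V -> V) : 'M[R]_m :=
  (\sum_(i < m) \sum_(j < m) <<br (delta_mx 0 i) (delta_mx 0 j)>>)%MS.

Definition two_step_nilpotent (br : V -> V -> V) : Prop :=
  (exists x y, br x y != 0) /\
  (forall x, (x <= commutator br)%MS -> in_center br x).

Definition ip (G : 'M[R]_m) (x y : V) : R := (x *m G *m y^T) 0 0.

Definition is_inner_product (G : 'M[R]_m) : Prop :=
  G^T = G /\ (forall x : V, x != 0 -> 0 < ip G x x).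

Definition nijenhuis (br : V -> V -> V) (J : 'M[R]_m) (x y : V) : V :=
  br x y + (br (x *m J) y + br x (y *m J)) *m J - br (x *m J) (y *m J).

Definition integrable (br : V -> V -> V) (J : 'M[R]_m) : Prop :=
  forall x y, nijenhuis br J x y = 0.

Definition z0 (br : V -> V -> V) (J : 'M[R]_m) : 'M[R]_m :=
  (commutator br + commutator br *m J)%MS.

Definition in_v (br : V -> V -> V) (J G : 'M[R]_m) (x : V) : Prop :=
  forall u, (u <= z0 br J)%MS -> ip G x u = 0.

Definition jmap (br : V -> V -> V) (J G : 'M[R]_m) (z v : V) : V :=
  xget 0 [set u | in_v br J G u /\
                  forall w, in_v br J G w -> ip G u w = ip G z (br v w)].

Definition Smap (br : V -> V -> V) (J G : 'M[R]_m) (z v : V) : V :=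
  jmap br J G (z *m J) v - jmap br J G z v *m J.

Definition S_commutes (br : V -> V -> V) (J G : 'M[R]_m) (z : V) : Prop :=
  forall v, in_v br J G v -> Smap br J G z (v *m J) = Smap br J G z v *m J.

End Defs.

From HB Require Import structures.
From mathcomp Require Import all_boot all_order all_algebra.
From mathcomp Require Import boolp classical_sets reals.
From mathcomp Require Import ring.
Import Order.TTheory GRing.Theory Num.Theory.
Local Open Scope ring_scope.
Set Implicit Arguments. Unset Strict Implicit. Unset Printing Implicit Defensive.

(* Since z0 is central, N_J(x, y) lies in z0 and only depends on the
   v-components of x and y. For v, w in v and z in z0 the definition of j gives
   <z, N_J(v, w)> = <S(z) v J - S(z) (v J), w>, so N_J vanishes iff every S(z)
   commutes with J_v. The condition "<z, N_J(v, w)> = 0 for all v, w" is linear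
   in z and, as N_J(v J, w) = - N_J(v, w) J, stable under z |-> z J; hence it
   suffices to check it on any P with z0 = P + P J. *)

Section Bracket.
Variables (R : realType) (m : nat) (br : 'rV[R]_m -> 'rV[R]_m -> 'rV[R]_m).
Hypothesis br_lie : is_lie_bracket br.

Lemma brDl x y w : br (x + y) w = br x w + br y w.
Proof. by case: br_lie => H _ _ _; have := H 1 x y w; rewrite !scale1r. Qed.

Lemma brDr x y w : br w (x + y) = br w x + br w y.
Proof. by case: br_lie => _ H _ _; have := H 1 x y w; rewrite !scale1r. Qed.

Lemma br0l w : br 0 w = 0.
Proof. by apply: (addrI (br 0 w)); rewrite -brDl !addr0. Qed.

Lemma br0r w : br w 0 = 0.
Proof. by apply: (addrI (br w 0)); rewrite -brDr !addr0. Qed.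

Lemma brZl a x w : br (a *: x) w = a *: br x w.
Proof. by case: br_lie => H _ _ _; rewrite -[a *: x]addr0 H br0l addr0. Qed.

Lemma brZr a x w : br w (a *: x) = a *: br w x.
Proof. by case: br_lie => _ H _ _; rewrite -[a *: x]addr0 H br0r addr0. Qed.

Lemma brNl x w : br (- x) w = - br x w.
Proof. by rewrite -scaleN1r brZl scaleN1r. Qed.

Lemma brC x y : br x y = - br y x.
Proof.
case: br_lie => _ _ H _; have := H (x + y).
by rewrite brDl !brDr !H add0r addr0 => /eqP; rewrite addr_eq0 => /eqP.
Qed.

Lemma br_suml (I : finType) (F : I -> 'rV[R]_m) w :
  br (\sum_i F i) w = \sum_i br (F i) w.
Proof.
exact: (big_morph _ (fun x y => brDl x y w) (br0l w)).
Qed.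

Lemma br_sumr (I : finType) (F : I -> 'rV[R]_m) w :
  br w (\sum_i F i) = \sum_i br w (F i).
Proof.
exact: (big_morph _ (fun x y => brDr x y w) (br0r w)).
Qed.

Lemma br_sub_commutator a b : (br a b <= commutator br)%MS.
Proof.
rewrite (row_sum_delta a) br_suml; apply: summx_sub => i _; rewrite brZl.
apply: scalemx_sub; rewrite (row_sum_delta b) br_sumr; apply: summx_sub => j _.
rewrite brZr; apply: scalemx_sub.
by apply: (sumsmx_sup i) => //; apply: (sumsmx_sup j) => //; rewrite genmxE.
Qed.

End Bracket.

Section Gram.
Variables (R : realType) (m : nat) (G : 'M[R]_m).
Implicit Types x y w : 'rV[R]_m.

Lemma ipDl x y w : ip G (x + y) w = ip G x w + ip G y w.
Proof. by rewrite /ip !mulmxDl mxE. Qed.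

Lemma ipDr x y w : ip G w (x + y) = ip G w x + ip G w y.
Proof. by rewrite /ip linearD /= mulmxDr mxE. Qed.

Lemma ipZl a x w : ip G (a *: x) w = a * ip G x w.
Proof. by rewrite /ip -!scalemxAl mxE. Qed.

Lemma ipZr a x w : ip G w (a *: x) = a * ip G w x.
Proof. by rewrite /ip linearZ /= -scalemxAr mxE. Qed.

Lemma ipNl x w : ip G (- x) w = - ip G x w.
Proof. by rewrite -scaleN1r ipZl mulN1r. Qed.

Lemma ipNr x w : ip G w (- x) = - ip G w x.
Proof. by rewrite -scaleN1r ipZr mulN1r. Qed.

Lemma ipBl x y w : ip G (x - y) w = ip G x w - ip G y w.
Proof. by rewrite ipDl ipNl. Qed.

Lemma ipBr x y w : ip G w (x - y) = ip G w x - ip G w y.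
Proof. by rewrite ipDr ipNr. Qed.

Lemma ip0l w : ip G 0 w = 0.
Proof. by rewrite /ip !mul0mx mxE. Qed.

Lemma ip0r w : ip G w 0 = 0.
Proof. by rewrite /ip trmx0 mulmx0 mxE. Qed.

Definition ip_orth (Z : 'M[R]_m) x := forall u, (u <= Z)%MS -> ip G x u = 0.

End Gram.

Section InnerProduct.
Variables (R : realType) (m : nat) (G : 'M[R]_m).
Hypothesis G_ip : is_inner_product G.
Implicit Types x y w : 'rV[R]_m.

Lemma ipC x y : ip G x y = ip G y x.
Proof.
case: G_ip => Gsym _; rewrite /ip.
have -> : (x *m G *m y^T) 0 0 = ((x *m G *m y^T)^T) 0 0 by rewrite [RHS]mxE.
by rewrite !trmx_mul Gsym trmxK mulmxA.
Qed.

Lemma ip_eq0 x : ip G x x = 0 -> x = 0.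
Proof. by case: G_ip => _ H Hx; apply/eqP; apply: contraT => /H; rewrite Hx ltxx. Qed.

Lemma inner_product_row_free : row_free G.
Proof.
rewrite -kermx_eq0 -submx0; apply/row_subP => i.
have /[!sub_kermx] /eqP Gr := row_sub i (kermx G).
suff -> : row i (kermx G) = 0 by rewrite sub0mx.
by apply: ip_eq0; rewrite /ip Gr mul0mx mxE.
Qed.

Lemma ip_orth_decomp (Z : 'M[R]_m) x :
  exists xv xz, [/\ ip_orth G Z xv, (xz <= Z)%MS & x = xv + xz].
Proof.
pose K := kermx (G *m Z^T).
have K_orth y : (y <= K)%MS -> ip_orth G Z y.
  rewrite sub_kermx mulmxA => /eqP Ky u /submxP [D ->].
  by rewrite /ip trmx_mul mulmxA Ky mul0mx mxE.
have KZ0 : (K :&: Z)%MS = 0.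
  apply/eqP; rewrite -submx0; apply/row_subP => i.
  have /[!sub_capmx] /andP[iK iZ] := row_sub i (K :&: Z)%MS.
  by rewrite (ip_eq0 (K_orth _ iK _ iZ)) sub0mx.
have rkGZ : \rank (G *m Z^T) = \rank Z.
  case: G_ip => Gsym _.
  by rewrite -[G]Gsym -trmx_mul mxrank_tr mxrankMfree // inner_product_row_free.
have KZ_full : row_full (K + Z)%MS.
  apply/eqP; rewrite -[LHS]addn0 -(mxrank0 R m m) -KZ0 mxrank_sum_cap.
  by rewrite mxrank_ker rkGZ subnK // rank_leq_col.
have /sub_addsmxP [[u1 u2] /= ->] := submx_full x KZ_full.
by exists (u1 *m K), (u2 *m Z); split; rewrite ?submxMl //; apply/K_orth/submxMl.
Qed.

Lemma ip_orth_represent (Z : 'M[R]_m) (f : 'rV[R]_m -> R) :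
    (forall a x y, f (a *: x + y) = a * f x + f y) ->
  exists u, ip_orth G Z u /\ forall w, ip_orth G Z w -> ip G u w = f w.
Proof.
move=> f_lin.
have fD x y : f (x + y) = f x + f y by have := f_lin 1 x y; rewrite scale1r mul1r.
have f0 : f 0 = 0 by apply: (addrI (f 0)); rewrite -fD !addr0.
pose a := (\row_i f 'e_i) *m invmx G.
have G_unit : G \in unitmx by rewrite -row_free_unit inner_product_row_free.
have a_repr w : ip G a w = f w.
  rewrite /ip /a mulmxKV // mxE [in RHS](row_sum_delta w).
  rewrite (big_morph f fD f0) /=.
  apply: eq_bigr => k _.
  by rewrite !mxE -[_ *: _]addr0 f_lin f0 addr0 mulrC.
have [av [az [av_orth az_Z a_split]]] := ip_orth_decomp Z a.
exists av; split => // w w_orth.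
by rewrite -a_repr a_split ipDl [ip G az w]ipC w_orth // addr0.
Qed.

End InnerProduct.

Section Integrability.
Variables (R : realType) (m : nat) (br : 'rV[R]_m -> 'rV[R]_m -> 'rV[R]_m).
Variables (J G : 'M[R]_m).
Hypothesis br_lie : is_lie_bracket br.
Hypothesis br_2step : two_step_nilpotent br.
Hypothesis JJ1 : J *m J = - 1%:M.
Hypothesis J_commutator : forall x, (x <= commutator br)%MS -> in_center br (x *m J).
Hypothesis G_ip : is_inner_product G.
Hypothesis G_J : forall x y, ip G (x *m J) (y *m J) = ip G x y.

Local Notation Z := (z0 br J).
Local Notation N := (nijenhuis br J).
Local Notation inv := (in_v br J G).
Local Notation S := (Smap br J G).
Implicit Types x y z v w : 'rV[R]_m.

Lemma mulmxJJ x : x *m J *m J = - x.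
Proof. by rewrite -mulmxA JJ1 mulmxN mulmx1. Qed.

Lemma ipJr x y : ip G x (y *m J) = - ip G (x *m J) y.
Proof. by rewrite -G_J mulmxJJ ipNr. Qed.

Lemma z0J x : (x <= Z)%MS -> (x *m J <= Z)%MS.
Proof.
case/sub_addsmxP => [[u1 u2]] /= ->; apply/sub_addsmxP; exists (- u2, u1).
by rewrite /= mulmxDl -!mulmxA JJ1 !mulmxN mulmx1 mulNmx addrC.
Qed.

Lemma z0_center x : (x <= Z)%MS -> in_center br x.
Proof.
case/sub_addsmxP => [[u1 u2]] /= -> y.
rewrite (brDl br_lie) mulmxA J_commutator ?submxMl // addr0.
by case: br_2step => _ -> //; rewrite submxMl.
Qed.

Lemma br_z0r x y : (x <= Z)%MS -> br y x = 0.
Proof. by move=> /z0_center xc; rewrite (brC br_lie) xc oppr0. Qed.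

Lemma nijenhuis_sub_z0 x y : (N x y <= Z)%MS.
Proof.
have sCZ := addsmxSl (commutator br) (commutator br *m J).
have sCJZ := addsmxSr (commutator br) (commutator br *m J).
rewrite /nijenhuis; apply: addmx_sub; last first.
  by rewrite -scaleN1r scalemx_sub // (submx_trans (br_sub_commutator _ _ _)).
apply: addmx_sub; first exact: submx_trans (br_sub_commutator _ _ _) sCZ.
by apply: submx_trans (submxMr J _) sCJZ; rewrite addmx_sub ?br_sub_commutator.
Qed.

Lemma nijenhuisDz0 x y c d : (c <= Z)%MS -> (d <= Z)%MS ->
  N (x + c) (y + d) = N x y.
Proof.
move=> cZ dZ; have [cJZ dJZ] := (z0J cZ, z0J dZ).
rewrite /nijenhuis !mulmxDl !(brDl br_lie, brDr br_lie) !(z0_center cZ, z0_center cJZ).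
by rewrite !(br_z0r _ dZ, br_z0r _ dJZ) !addr0.
Qed.

Lemma nijenhuisJl x y : N (x *m J) y = - (N x y *m J).
Proof.
rewrite /nijenhuis mulmxJJ !(brNl br_lie) !mulmxDl !mulNmx mulmxJJ.
by rewrite !opprD !opprK mulmxJJ opprK addrAC addrCA addrA.
Qed.

Lemma in_vD x y : inv x -> inv y -> inv (x + y).
Proof. by move=> xv yv u uZ; rewrite ipDl xv // yv // addr0. Qed.

Lemma in_vN x : inv x -> inv (- x).
Proof. by move=> xv u uZ; rewrite ipNl xv // oppr0. Qed.

Lemma in_vJ x : inv x -> inv (x *m J).
Proof. by move=> xv u uZ; rewrite -[LHS]opprK -ipJr xv ?oppr0 // z0J. Qed.

Lemma jmapP z v : inv (jmap br J G z v) /\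
  forall w, inv w -> ip G (jmap br J G z v) w = ip G z (br v w).
Proof.
rewrite /jmap.
apply: (xgetPex 0 (P := [set u | inv u /\ forall w, inv w -> ip G u w = ip G z (br v w)])).
have [u [uv uP]] : exists u, ip_orth G Z u /\
    forall w, ip_orth G Z w -> ip G u w = ip G z (br v w).
  apply: ip_orth_represent => // a x y.
  by rewrite (brDr br_lie) (brZr br_lie) ipDr ipZr.
by exists u.
Qed.

Lemma in_v_Smap z v : inv (S z v).
Proof.
by apply: in_vD; [exact: (jmapP _ _).1 | apply/in_vN/in_vJ; exact: (jmapP _ _).1].
Qed.

Lemma ip_nijenhuis_Smap z v w : inv v -> inv w ->
  ip G z (N v w) = ip G (S z v *m J - S z (v *m J)) w.
Proof.
move=> vv wv; have wJv := in_vJ wv.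
rewrite /nijenhuis /Smap ipBr ipDr ipJr ipDr.
rewrite -((jmapP z v).2 w wv) -((jmapP (z *m J) (v *m J)).2 w wv).
rewrite -((jmapP (z *m J) v).2 _ wJv) -((jmapP z (v *m J)).2 _ wJv) !ipJr.
rewrite !mulmxBl mulmxJJ !ipBl ipNl.
ring.
Qed.

Lemma S_commutesP z : S_commutes br J G z <->
  (forall v w, inv v -> inv w -> ip G z (N v w) = 0).
Proof.
split=> [Sz v w vv wv | zN v vv].
  by rewrite ip_nijenhuis_Smap // Sz // subrr ip0l.
have Ev : inv (S z v *m J - S z (v *m J)).
  by apply: in_vD; [apply: in_vJ | apply: in_vN]; apply: in_v_Smap.
apply/eqP; rewrite eq_sym -subr_eq0; apply/eqP/(ip_eq0 G_ip).
by rewrite -ip_nijenhuis_Smap ?zN // in_vJ.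
Qed.

Lemma S_commutesD z1 z2 :
  S_commutes br J G z1 -> S_commutes br J G z2 -> S_commutes br J G (z1 + z2).
Proof.
move=> /S_commutesP z1N /S_commutesP z2N; apply/S_commutesP => v w vv wv.
by rewrite ipDl z1N // z2N // addr0.
Qed.

Lemma S_commutesJ z : S_commutes br J G z -> S_commutes br J G (z *m J).
Proof.
move=> /S_commutesP zN; apply/S_commutesP => v w vv wv.
by rewrite -[LHS]opprK -ipJr -ipNr -nijenhuisJl zN ?oppr0 //; apply: in_vJ.
Qed.

Lemma integrable_iff_S_commutes_z0 :
  integrable br J <-> forall z, (z <= Z)%MS -> S_commutes br J G z.
Proof.
split=> [NJ0 z _ | S_comm x y]; first by apply/S_commutesP => v w _ _; rewrite NJ0 ip0r.
have [xv [xz [xvv xzZ ->]]] := ip_orth_decomp G_ip Z x.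
have [yv [yz [yvv yzZ ->]]] := ip_orth_decomp G_ip Z y.
rewrite nijenhuisDz0 //; apply: (ip_eq0 G_ip).
exact: (S_commutesP _).1 (S_comm _ (nijenhuis_sub_z0 _ _)) _ _ xvv yvv.
Qed.

Lemma integrable_iff_S_commutes_on (P : 'M[R]_m) :
    (P + P *m J :=: Z)%MS ->
  integrable br J <-> forall z, (z <= P)%MS -> S_commutes br J G z.
Proof.
move=> PZ; rewrite integrable_iff_S_commutes_z0; split=> [S_comm z zP | S_comm z].
  by apply: S_comm; rewrite -PZ (submx_trans zP) ?addsmxSl.
rewrite -PZ => /sub_addsmxP [[u1 u2] /= ->].
rewrite mulmxA; apply: S_commutesD; last apply: S_commutesJ.
  all: by apply: S_comm; rewrite submxMl.
Qed.

End Integrability.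

Theorem mainTheorem11 (R : realType) (m : nat)
    (br : 'rV[R]_m -> 'rV[R]_m -> 'rV[R]_m) (J G : 'M[R]_m) :
  is_lie_bracket br ->
  two_step_nilpotent br ->
  J *m J = - 1%:M ->
  (forall x, (x <= commutator br)%MS -> in_center br (x *m J)) ->
  is_inner_product G ->
  (forall x y, ip G (x *m J) (y *m J) = ip G x y) ->
  (integrable br J <->
     (forall z, (z <= z0 br J)%MS -> S_commutes br J G z)) /\
  (forall P : 'M[R]_m,
     (P <= z0 br J)%MS ->
     (P + P *m J == z0 br J)%MS ->
     mxdirect (P + P *m J) ->
     (integrable br J <-> (forall z, (z <= P)%MS -> S_commutes br J G z))).
Proof.
move=> br_lie br_2step JJ1 J_commutator G_ip G_J.
split; first exact: integrable_iff_S_commutes_z0.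
move=> P _ /eqmxP PZ _.
exact: integrable_iff_S_commutes_on.
Qed.
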